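(* For every integer $n\ge3$, the number of cusps of $\Gamma_n$ equals $$\frac{n^2}{2}\prod_{p\mid n,\ p\text{ prime}}\left(1-p^{-2}\right).$$
   Context: $\Gamma_n=\left\{\begin{pmatrix}a&b\\c&d\end{pmatrix}\in\mathrm{SL}_2(\mathbb Z):n^2\mid c,\ a\equiv d\equiv\pm1\pmod n\right\}$. The cusps of $\Gamma_n$ are the orbits of $\Gamma_n$ acting by Möbius transformations on $\mathbb Q\cup\{\infty\}$. *)

From mathcomp Require Import all_boot all_order all_algebra.
Set Implicit Arguments. Unset Strict Implicit. Unset Printing Implicit Defensive.
Import Order.TTheory GRing.Theory Num.Theory.
Local Open Scope ring_scope.

Definition ma (g : 'M[int]_2) : int := g ord0 ord0.
Definition mb (g : 'M[int]_2) : int := g ord0 ord_max.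
Definition mc (g : 'M[int]_2) : int := g ord_max ord0.
Definition md (g : 'M[int]_2) : int := g ord_max ord_max.

Definition in_Gamma (n : nat) (g : 'M[int]_2) : Prop :=
  \det g = 1 /\
  (((n ^ 2)%N)%:Z %| mc g)%Z /\
  (((ma g = 1 %[mod n%:Z])%Z /\ (md g = 1 %[mod n%:Z])%Z) \/
   ((ma g = -1 %[mod n%:Z])%Z /\ (md g = -1 %[mod n%:Z])%Z)).

(* P^1(Q) = Q u {oo}, with None = oo. *)
Definition cuspQ := option rat.

Definition mobius (g : 'M[int]_2) (x : cuspQ) : cuspQ :=
  let a : rat := (ma g)%:~R in let b : rat := (mb g)%:~R in
  let c : rat := (mc g)%:~R in let d : rat := (md g)%:~R in
  match x with
  | None => if c == 0 then None else Some (a / c)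
  | Some q => if c * q + d == 0 then None else Some ((a * q + b) / (c * q + d))
  end.

Definition Gamma_equiv (n : nat) (x y : cuspQ) : Prop :=
  exists g, in_Gamma n g /\ mobius g x = y.

(* s is a complete system of pairwise inequivalent representatives of the
   cusps (Gamma_n-orbits on Q u {oo}); its size is the number of cusps. *)
Definition cusp_transversal (n : nat) (s : seq cuspQ) : Prop :=
  (forall i j, (i < size s)%N -> (j < size s)%N -> i <> j ->
     ~ Gamma_equiv n (nth None s i) (nth None s j)) /\
  (forall x : cuspQ, exists2 y, y \in s & Gamma_equiv n y x).

Definition cusp_formula (n : nat) : rat :=
  ((n ^ 2)%N)%:R / 2 * \prod_(p <- primes n) (1 - (((p ^ 2)%N)%:R)^-1).

From mathcomp Require Import all_boot all_order all_algebra.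
From mathcomp Require Import ring zify.
Set Implicit Arguments. Unset Strict Implicit. Unset Printing Implicit Defensive.
Import Order.TTheory GRing.Theory Num.Theory.
Local Open Scope ring_scope.

(* Conjugation by diag(n, 1) carries Gamma_n onto the group of integer matrices of
   determinant 1 congruent to +-1 modulo n.  Writing a cusp as a primitive vector
   (p, q) up to sign, two cusps are equivalent under that group iff their vectors are
   congruent modulo n up to sign; the nontrivial direction uses that SL_2(Z) is
   transitive on primitive vectors and the principal congruence subgroup Gamma(n) is
   normal.  So cusps correspond to the pairs (a, b) modulo n with gcd(a, b, n) = 1,
   taken up to sign.  These pairs number n^2 prod_(p | n) (1 - p^-2) (multiplicative
   by the Chinese remainder theorem), and for n >= 3 none is its own negative. *)

Lemma sqr_int_eq1 (e : int) : e * e = 1 -> e = 1 \/ e = -1.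
Proof. by move/eqP; rewrite -expr2 sqrf_eq1 => /orP[] /eqP; [left | right]. Qed.

Lemma coprimez_sgn e a b : e * e = 1 -> coprimez (e * a) (e * b) = coprimez a b.
Proof. by case/sqr_int_eq1=> ->; rewrite ?mul1r ?mulN1r ?coprimeNz ?coprimezN. Qed.

Lemma coprime_add_part (a b n : nat) :
  (0 < a)%N -> (0 < b)%N -> coprime (gcdn a b) n ->
  coprime (a + b`_(\pi(a))^' * n) b.
Proof.
move=> a_gt0 b_gt0 cop; set k := (b`_(\pi(a))^')%N.
rewrite coprime_has_primes ?addn_gt0 ?a_gt0 //; apply/hasPn => p.
rewrite !mem_primes => /and3P[p_pr _ p_b]; apply/negP => /and3P[_ _ p_x].
have p_pi_a : (p \in \pi(a)) = (p %| a)%N by rewrite mem_primes p_pr a_gt0.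
have [p_a | p'a] := boolP (p %| a)%N.
  have p'k : ~~ (p %| k)%N.
    apply: contraL p_a => /pnat_dvd/(_ (part_pnat _ _)).
    by rewrite pnatE // inE /= p_pi_a.
  have p'n : ~~ (p %| n)%N.
    apply/negP => p_n; have : (p %| gcdn (gcdn a b) n)%N by rewrite !dvdn_gcd p_a p_b.
    by rewrite (eqP cop) dvdn1 => /eqP p1; rewrite p1 in p_pr.
  by move: p_x; rewrite dvdn_addr // Euclid_dvdM // (negbTE p'k) (negbTE p'n).
have p_k : (p %| k)%N.
  move: p_b; rewrite -(partnC (\pi(a)) b_gt0) Euclid_dvdM // => /orP[|//].
  move/pnat_dvd/(_ (part_pnat _ _)); rewrite pnatE // p_pi_a => p_a.
  by rewrite p_a in p'a.
by move: p_x; rewrite dvdn_addl ?dvdn_mulr // (negbTE p'a).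
Qed.

Lemma big_primesM (R : comPzSemiRingType) (F : nat -> R) m n :
  (0 < m)%N -> (0 < n)%N -> coprime m n ->
  \prod_(p <- primes (m * n)) F p = \prod_(p <- primes m) F p * \prod_(p <- primes n) F p.
Proof.
move=> m_gt0 n_gt0 cop; rewrite -big_cat; apply/perm_big/uniq_perm.
- exact: primes_uniq.
- by rewrite cat_uniq !primes_uniq andbT -coprime_has_primes.
- by move=> p; rewrite primesM // mem_cat.
Qed.

Section InvolutionTransversal.
Variables (T : finType) (nu : T -> T) (C : {set T}).
Hypotheses (nuK : involutive nu) (nuC : forall c, c \in C -> nu c \in C)
  (nu_neq : forall c, c \in C -> nu c != c).

Definition eq_mod_nu (c d : T) := (c == d) || (c == nu d).

Lemma eq_mod_nu_sym c d : eq_mod_nu c d = eq_mod_nu d c.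
Proof. by rewrite /eq_mod_nu eq_sym -(can2_eq nuK nuK) [nu c == d]eq_sym. Qed.

Lemma eq_mod_nu_trans c d f : eq_mod_nu c d -> eq_mod_nu d f -> eq_mod_nu c f.
Proof. by rewrite /eq_mod_nu => /orP[]/eqP-> /orP[]/eqP->; rewrite ?nuK eqxx ?orbT. Qed.

Definition half_set : {set T} := [set c in C | enum_rank c < enum_rank (nu c)]%N.

Lemma half_setN c : c \in C -> (nu c \in half_set) = (c \notin half_set).
Proof.
move=> cC; rewrite !inE nuC // cC nuK /= -leqNgt ltn_neqAle andb_idl // => _.
by apply: contra (nu_neq cC) => /eqP/val_inj/enum_rank_inj->.
Qed.

Lemma half_set_sub : half_set \subset C.
Proof. by apply/subsetP => c; rewrite inE => /andP[]. Qed.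

Lemma card_half_set : #|C| = (2 * #|half_set|)%N.
Proof.
rewrite -(cardsID half_set C) (setIidPr half_set_sub).
have -> : C :\: half_set = nu @: half_set.
  apply/setP => c; rewrite in_setD; apply/andP/imsetP => [[c'H cC] | [d dH ->]].
    by exists (nu c); rewrite ?nuK // half_setN.
  have dC := subsetP half_set_sub d dH.
  by rewrite half_setN // negbK dH nuC.
by rewrite card_imset ?addnn ?mul2n //; exact: can_inj nuK.
Qed.

Variables (X : eqType) (x0 : X) (E : X -> X -> Prop) (cls : X -> T) (rep : T -> X).
Hypotheses (cls_in : forall x, cls x \in C)
  (E_cls : forall x y, E x y <-> eq_mod_nu (cls x) (cls y))
  (cls_rep : forall c, c \in C -> eq_mod_nu (cls (rep c)) c).

Definition half_set_reps : seq X := map rep (enum half_set).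

Lemma half_set_transversal :
  (forall i j, (i < size half_set_reps)%N -> (j < size half_set_reps)%N -> i <> j ->
     ~ E (nth x0 half_set_reps i) (nth x0 half_set_reps j)) /\
  (forall x, exists2 y, y \in half_set_reps & E y x).
Proof.
have HC := subsetP half_set_sub.
split=> [i j | x].
  rewrite !size_map => lt_i lt_j neq_ij.
  rewrite !(nth_map (cls x0)) //; set ci := nth _ _ i; set cj := nth _ _ j.
  move=> /E_cls ecls.
  have ciH : ci \in half_set by rewrite -mem_enum; apply: mem_nth.
  have cjH : cj \in half_set by rewrite -mem_enum; apply: mem_nth.
  have e_ij : eq_mod_nu ci cj.
    apply: (@eq_mod_nu_trans _ (cls (rep ci))); first by rewrite eq_mod_nu_sym cls_rep ?HC.
    exact: eq_mod_nu_trans ecls (cls_rep (HC _ cjH)).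
  case/orP: e_ij => /eqP e_ij.
    apply: neq_ij; apply/eqP.
    by rewrite -(nth_uniq (cls x0) lt_i lt_j (enum_uniq _)); apply/eqP.
  by move: ciH; rewrite e_ij half_setN ?HC // cjH.
have [xH | xH'] := boolP (cls x \in half_set).
  exists (rep (cls x)); first by apply: map_f; rewrite mem_enum.
  by apply/E_cls/cls_rep.
exists (rep (nu (cls x))); first by apply: map_f; rewrite mem_enum half_setN.
apply/E_cls; apply: eq_mod_nu_trans (cls_rep (nuC (cls_in x))) _.
by rewrite /eq_mod_nu eqxx orbT.
Qed.

End InvolutionTransversal.

(** * Integer 2x2 matrices and the principal congruence subgroup *)

Definition mx2 (a b c d : int) : 'M[int]_2 :=
  \matrix_(i, j) if i == ord0 then (if j == ord0 then a else b)
                 else (if j == ord0 then c else d).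

Lemma mx2_a a b c d : ma (mx2 a b c d) = a. Proof. by rewrite /ma mxE. Qed.
Lemma mx2_b a b c d : mb (mx2 a b c d) = b. Proof. by rewrite /mb mxE. Qed.
Lemma mx2_c a b c d : mc (mx2 a b c d) = c. Proof. by rewrite /mc mxE. Qed.
Lemma mx2_d a b c d : md (mx2 a b c d) = d. Proof. by rewrite /md mxE. Qed.
Definition mx2E := (mx2_a, mx2_b, mx2_c, mx2_d).

Lemma mx2_eta (g : 'M[int]_2) : g = mx2 (ma g) (mb g) (mc g) (md g).
Proof.
apply/matrixP => i j; rewrite mxE /ma /mb /mc /md.
by case: i j => [[|[|//]] ?] [[|[|//]] ?]; congr (g _ _); apply: val_inj.
Qed.

Lemma mx2_scalar e : e%:M = mx2 e 0 0 e.
Proof. by apply/matrixP => i j; rewrite !mxE; case: i j => [[|[|//]] ?] [[|[|//]] ?]. Qed.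

Lemma mx2B a b c d a' b' c' d' :
  mx2 a b c d - mx2 a' b' c' d' = mx2 (a - a') (b - b') (c - c') (d - d').
Proof. by apply/matrixP => i j; rewrite !mxE; case: (i == ord0); case: (j == ord0). Qed.

Lemma mulmx2 a b c d a' b' c' d' :
  mx2 a b c d *m mx2 a' b' c' d' =
  mx2 (a * a' + b * c') (a * b' + b * d') (c * a' + d * c') (c * b' + d * d').
Proof.
apply/matrixP => i j; rewrite !mxE !big_ord_recr big_ord0 /= add0r !mxE.
by case: i j => [[|[|//]] ?] [[|[|//]] ?].
Qed.

Lemma det_mx2 a b c d : \det (mx2 a b c d) = a * d - b * c.
Proof.
rewrite (expand_det_row _ ord0) !big_ord_recr big_ord0 /= add0r /cofactor.
by rewrite !det_mx11 !mxE /= expr0 expr1 !mul1r mulN1r mulrN.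
Qed.

Lemma det_mx2E (g : 'M[int]_2) : \det g = ma g * md g - mb g * mc g.
Proof. by rewrite {1}[g]mx2_eta det_mx2. Qed.

Definition act (g : 'M[int]_2) (v : int * int) : int * int :=
  (ma g * v.1 + mb g * v.2, mc g * v.1 + md g * v.2).

Lemma act_mx2 a b c d v : act (mx2 a b c d) v = (a * v.1 + b * v.2, c * v.1 + d * v.2).
Proof. by rewrite /act !mx2E. Qed.

Lemma act_mulmx g h v : act (g *m h) v = act g (act h v).
Proof. by rewrite [g]mx2_eta [h]mx2_eta mulmx2 !act_mx2 /=; congr pair; ring. Qed.

Lemma act1 v : act 1%:M v = v.
Proof. by rewrite mx2_scalar act_mx2; case: v => x y /=; congr pair; ring. Qed.

Lemma coprimez_act g v :
  \det g = 1 -> coprimez v.1 v.2 -> coprimez (act g v).1 (act g v).2.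
Proof.
rewrite det_mx2E => det1 /coprimezP [[p q] /= Bez].
apply/coprimezP; exists (p * md g - q * mc g, q * ma g - p * mb g) => /=.
by rewrite -[RHS]mulr1 -{1}det1 -Bez; ring.
Qed.

Definition mx_dvd (n : int) m p (A : 'M[int]_(m, p)) := forall i j, (n %| A i j)%Z.

Lemma mx_dvd_mull n m p q (A : 'M_(m, p)) (B : 'M_(p, q)) :
  mx_dvd n B -> mx_dvd n (A *m B).
Proof. by move=> dB i j; rewrite mxE; apply: rpred_sum => k _; apply: dvdz_mull. Qed.

Lemma mx_dvd_mulr n m p q (A : 'M_(m, p)) (B : 'M_(p, q)) :
  mx_dvd n A -> mx_dvd n (A *m B).
Proof. by move=> dA i j; rewrite mxE; apply: rpred_sum => k _; apply: dvdz_mulr. Qed.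

Lemma mx_dvd_mx2 n a b c d :
  mx_dvd n (mx2 a b c d) <-> [/\ n %| a, n %| b, n %| c & n %| d]%Z.
Proof.
split=> [dA | [da db dc dd] i j].
  by move: (dA ord0 ord0) (dA ord0 ord_max) (dA ord_max ord0) (dA ord_max ord_max);
     rewrite !mxE.
by rewrite mxE; case: (i == ord0); case: (j == ord0).
Qed.

Definition in_Gamma_principal (n : int) (g : 'M[int]_2) :=
  \det g = 1 /\ mx_dvd n (g - 1%:M).

Lemma in_Gamma_principal_conj n M M' K : M *m M' = 1%:M ->
  in_Gamma_principal n K -> in_Gamma_principal n (M *m K *m M').
Proof.
move=> MM' [detK dK]; split.
  by rewrite !det_mulmx detK mulr1 -det_mulmx MM' det1.
have -> : M *m K *m M' - 1%:M = M *m (K - 1%:M) *m M'.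
  by rewrite mulmxBr mulmxBl mulmx1 MM'.
exact/mx_dvd_mulr/mx_dvd_mull.
Qed.

(* If p s + q t = 1, the column (- q, p) + q (s, t) completes (s, t) to a matrix of
   determinant 1, and it is congruent to (0, 1) modulo n. *)
Lemma in_Gamma_principal_col n s t :
  coprimez s t -> (n %| s - 1)%Z -> (n %| t)%Z ->
  exists2 K, in_Gamma_principal n K & act K (1, 0) = (s, t).
Proof.
case/coprimezP=> [[p q] /= Bez] s1 t0.
exists (mx2 s (q * (s - 1)) t (p + q * t)); last first.
  by rewrite act_mx2 /=; congr pair; ring.
split; first by rewrite det_mx2 -[RHS]Bez; ring.
rewrite mx2_scalar mx2B subr0; apply/mx_dvd_mx2; split; rewrite ?subr0 //.
  exact: dvdz_mull.
have -> : p + q * t - 1 = - p * (s - 1) by rewrite -[in LHS]Bez; ring.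
exact: dvdz_mull.
Qed.

(* M in SL_2(Z) maps (1, 0) to v, and M^-1 w is congruent to (1, 0); a K in Gamma(n)
   mapping (1, 0) to M^-1 w, conjugated by M, maps v to w. *)
Lemma in_Gamma_principal_transitive n v w :
  coprimez v.1 v.2 -> coprimez w.1 w.2 -> (n %| w.1 - v.1)%Z -> (n %| w.2 - v.2)%Z ->
  exists2 g, in_Gamma_principal n g & act g v = w.
Proof.
case: v w => [x y] [x' y'] /= /coprimezP [[p q] /= Bez] cop' dx dy.
pose M := mx2 x (- q) y p; pose M' := mx2 p q (- y) x.
have MM' : M *m M' = 1%:M by rewrite mulmx2 mx2_scalar -Bez; congr mx2; ring.
have M'v : act M' (x, y) = (1, 0) by rewrite act_mx2 /= -Bez; congr pair; ring.
have [s1 t0] : (n %| (act M' (x', y')).1 - 1)%Z /\ (n %| (act M' (x', y')).2)%Z.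
  rewrite act_mx2 /=; split.
    have -> : p * x' + q * y' - 1 = p * (x' - x) + q * (y' - y) by rewrite -Bez; ring.
    by rewrite rpredD ?dvdz_mull.
  have -> : - y * x' + x * y' = x * (y' - y) - y * (x' - x) by ring.
  by rewrite rpredB ?dvdz_mull.
have detM' : \det M' = 1 by rewrite det_mx2 -Bez; ring.
have [K GK K1] := in_Gamma_principal_col (@coprimez_act M' (x', y') detM' cop') s1 t0.
exists (M *m K *m M'); first exact: in_Gamma_principal_conj.
by rewrite !act_mulmx M'v K1 -surjective_pairing -act_mulmx MM' act1.
Qed.

(** * Cusps as primitive vectors *)

Definition cusp_of_vec (v : int * int) : cuspQ :=
  if v.2 == 0 then None else Some (v.1%:~R / v.2%:~R).

Definition vec_of_cusp (x : cuspQ) : int * int :=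
  if x is Some q then (numq q, denq q) else (1, 0).

Lemma vec_of_cuspK : cancel vec_of_cusp cusp_of_vec.
Proof. by case=> [q|] //; rewrite /cusp_of_vec /= denq_eq0 divq_num_den. Qed.

Lemma coprimez_vec_of_cusp x : coprimez (vec_of_cusp x).1 (vec_of_cusp x).2.
Proof. by case: x => [q|]; rewrite coprimezE //= coprime_num_den. Qed.

Lemma cusp_of_vecZ e v : e != 0 -> cusp_of_vec (e * v.1, e * v.2) = cusp_of_vec v.
Proof.
move=> e0; rewrite /cusp_of_vec /= mulf_eq0 (negbTE e0) /=; case: eqP => // /eqP v0.
have e0' : (e%:~R : rat) != 0 by rewrite intr_eq0.
have v0' : (v.2%:~R : rat) != 0 by rewrite intr_eq0.
by congr Some; rewrite !rmorphM /=; field; rewrite e0' v0'.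
Qed.

Lemma vec_of_cusp_of_vec v : coprimez v.1 v.2 ->
  exists2 e : int, e * e = 1 & vec_of_cusp (cusp_of_vec v) = (e * v.1, e * v.2).
Proof.
case: v => p q; rewrite /cusp_of_vec /=; have [-> | q0] := eqVneq q 0.
  rewrite coprimezE /coprime gcdn0 => /eqP p1.
  by case: p p1 => [[|[|]]|[|]] //= _; [exists 1 | exists (-1)].
move=> cop /=; rewrite coprimeq_num ?coprimeq_den // (negbTE q0).
exists (Num.sg q); first by rewrite -expr2 sqr_sg q0.
by rewrite -normrEsg.
Qed.

Lemma cusp_of_vec_eq v w : coprimez v.1 v.2 -> coprimez w.1 w.2 ->
  cusp_of_vec v = cusp_of_vec w -> exists2 f : int, f * f = 1 & w = (f * v.1, f * v.2).
Proof.
move=> cv cw vw; have [e e2 ev] := vec_of_cusp_of_vec cv.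
have [f f2 fw] := vec_of_cusp_of_vec cw.
exists (f * e); first by rewrite mulrACA f2 e2 mulr1.
move: fw; rewrite -vw ev => -[E1 E2].
by rewrite -!mulrA E1 E2 !mulrA f2 !mul1r; case: (w).
Qed.

Lemma mobius_cusp_of_vec g v :
  coprimez v.1 v.2 -> mobius g (cusp_of_vec v) = cusp_of_vec (act g v).
Proof.
case: v => p q cop; rewrite /cusp_of_vec /act /mobius /=.
have [q0 | q0] := eqVneq q 0.
  have p0 : p != 0 by apply: contraTneq cop => ->; rewrite q0.
  have p0' : (p%:~R : rat) != 0 by rewrite intr_eq0.
  rewrite q0 !mulr0 !addr0 mulf_eq0 (negbTE p0) orbF intr_eq0.
  case: eqP => // /eqP c0; have c0' : ((mc g)%:~R : rat) != 0 by rewrite intr_eq0.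
  by congr Some; rewrite !rmorphM /=; field; rewrite c0' p0'.
have q0' : (q%:~R : rat) != 0 by rewrite intr_eq0.
have -> : (mc g)%:~R * (p%:~R / q%:~R) + (md g)%:~R =
          ((mc g * p + md g * q)%:~R : rat) / q%:~R.
  by rewrite rmorphD !rmorphM /=; field.
rewrite mulf_eq0 invr_eq0 (negbTE q0') orbF intr_eq0; case: eqP => // /eqP d0.
have d0' : ((mc g * p + md g * q)%:~R : rat) != 0 by rewrite intr_eq0.
rewrite rmorphD !rmorphM /= in d0' *.
by congr Some; rewrite !rmorphD !rmorphM /=; field; rewrite q0' d0'.
Qed.

Lemma act_eqmod n g e v : mx_dvd n (g - e%:M) ->
  (n %| (act g v).1 - e * v.1)%Z /\ (n %| (act g v).2 - e * v.2)%Z.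
Proof.
rewrite {1}[g]mx2_eta mx2_scalar mx2B !subr0 => /mx_dvd_mx2[da db dc dd].
rewrite /act /=; split.
  have -> : ma g * v.1 + mb g * v.2 - e * v.1 = (ma g - e) * v.1 + mb g * v.2 by ring.
  by rewrite rpredD ?dvdz_mulr.
have -> : mc g * v.1 + md g * v.2 - e * v.2 = mc g * v.1 + (md g - e) * v.2 by ring.
by rewrite rpredD ?dvdz_mulr.
Qed.

Definition eqmod_pm (n : int) (v w : int * int) :=
  exists2 e : int, e * e = 1 & (n %| v.1 - e * w.1)%Z /\ (n %| v.2 - e * w.2)%Z.

Definition in_Gamma_principal_pm (n : int) (g : 'M[int]_2) :=
  exists2 e : int, e * e = 1 & \det g = 1 /\ mx_dvd n (g - e%:M).

Lemma Gamma_principal_pm_orbitP n v w : coprimez v.1 v.2 -> coprimez w.1 w.2 ->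
  (exists2 g, in_Gamma_principal_pm n g & mobius g (cusp_of_vec v) = cusp_of_vec w)
  <-> eqmod_pm n v w.
Proof.
move=> cv cw; split=> [[g [e e2 [detg dg]] gvw] | [e e2 [d1 d2]]].
  rewrite mobius_cusp_of_vec // in gvw.
  have [f f2 ->] := cusp_of_vec_eq (coprimez_act detg cv) cw gvw.
  have [d1 d2] := act_eqmod v dg; set u := act g v in d1 d2 *.
  exists (e * f); first by rewrite mulrACA e2 f2 mulr1.
  have sgn x y : (n %| y - e * x)%Z -> (n %| x - e * f * (f * y))%Z.
    have -> : x - e * f * (f * y) =
              (1 - e * e) * x + e * (1 - f * f) * y - e * (y - e * x) by ring.
    by rewrite e2 f2 !subrr !(mul0r, mulr0, add0r, sub0r) rpredN => /dvdz_mull.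
  by split; apply: sgn.
have e0 : e != 0 by case/sqr_int_eq1: e2 => ->.
have [g Gg gv] : exists2 g, in_Gamma_principal n g & act g v = (e * w.1, e * w.2).
  by apply: in_Gamma_principal_transitive; rewrite /= ?coprimez_sgn // -opprB rpredN.
exists g; first by exists 1; rewrite ?mulr1.
by rewrite mobius_cusp_of_vec // gv cusp_of_vecZ.
Qed.

Definition scale_cusp (n : nat) : cuspQ -> cuspQ := omap ( *%R n%:R).
Definition unscale_cusp (n : nat) : cuspQ -> cuspQ := omap ( *%R n%:R^-1).

Section Scaling.
Variables (n : nat) (n_gt0 : (0 < n)%N).

Let n0 : (n%:R : rat) != 0. Proof. by rewrite pnatr_eq0 -lt0n. Qed.

Lemma scale_cuspK : cancel (scale_cusp n) (unscale_cusp n).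
Proof. by case=> [q|] //=; rewrite mulKf. Qed.

Lemma unscale_cuspK : cancel (unscale_cusp n) (scale_cusp n).
Proof. by case=> [q|] //=; rewrite mulVKf. Qed.

Lemma scale_cusp_mobius a b c d x :
  scale_cusp n (mobius (mx2 a b (n%:Z * c) d) x) =
  mobius (mx2 a (n%:Z * b) c d) (scale_cusp n x).
Proof.
rewrite /mobius !mx2E !rmorphM /=; case: x => [q|] /=.
  have -> : (n%:~R * c%:~R * q + d%:~R : rat) = c%:~R * (n%:R * q) + d%:~R by ring.
  by case: eqP => //= _; congr Some; ring.
by rewrite mulf_eq0 (negbTE n0); case: eqP => //= /eqP c0; congr Some; field; rewrite c0.
Qed.

Lemma Gamma_equiv_scale x y : Gamma_equiv n x y <->
  exists2 g, in_Gamma_principal_pm n g & mobius g (scale_cusp n x) = scale_cusp n y.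
Proof.
split=> [[g [[detg [dc hmod]] <-]] | [g [e e2 [detg dg]] gxy]].
  have [k ck] := dvdzP dc.
  have cE : mc g = n%:Z * (k * n%:Z) by rewrite ck expnS expn1 PoszM; ring.
  have [e e2 [da dd]] : exists2 e : int, e * e = 1 & (n %| ma g - e)%Z /\ (n %| md g - e)%Z.
    by case: hmod => -[ha hd]; [exists 1 | exists (-1)];
       rewrite ?mulrNN ?mulr1 // -!eqz_mod_dvd ha hd !eqxx.
  exists (mx2 (ma g) (n%:Z * mb g) (k * n%:Z) (md g)).
    exists e => //; split; first by rewrite det_mx2 -detg det_mx2E cE; ring.
    rewrite mx2_scalar mx2B !subr0; apply/mx_dvd_mx2.
    by split => //; [apply: dvdz_mulr | apply: dvdz_mull]; apply: dvdzz.
  by rewrite [in RHS](mx2_eta g) cE scale_cusp_mobius.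
move: dg; rewrite {1}[g]mx2_eta mx2_scalar mx2B !subr0.
case/mx_dvd_mx2=> [da /dvdzP[b bE] dc dd].
exists (mx2 (ma g) b (n%:Z * mc g) (md g)); split; last first.
  apply: (can_inj scale_cuspK); rewrite scale_cusp_mobius -gxy.
  by rewrite [in RHS](mx2_eta g) bE mulrC.
split; first by rewrite det_mx2 -detg det_mx2E bE; ring.
split; first by rewrite mx2E expnS expn1 PoszM dvdz_mul ?dvdzz.
by rewrite !mx2E; case/sqr_int_eq1: e2 => eE; rewrite eE in da dd;
  [left | right]; rewrite -!eqz_mod_dvd in da dd; split; apply/eqP.
Qed.

Lemma Gamma_equivP x y : Gamma_equiv n x y <->
  eqmod_pm n (vec_of_cusp (scale_cusp n x)) (vec_of_cusp (scale_cusp n y)).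
Proof.
apply: iff_trans (Gamma_equiv_scale x y) _.
rewrite -{1}(vec_of_cuspK (scale_cusp n x)) -{1}(vec_of_cuspK (scale_cusp n y)).
exact: Gamma_principal_pm_orbitP (coprimez_vec_of_cusp _) (coprimez_vec_of_cusp _).
Qed.

End Scaling.

(** * Residues modulo n *)

Section Residues.
Variables (n : nat) (n_gt0 : (0 < n)%N).

Lemma absz_modz_ltn (z : int) : (`|(z %% n)%Z| < n)%N.
Proof. by rewrite -ltz_nat gez0_abs ?modz_ge0 ?ltz_pmod // eqz_nat -lt0n. Qed.

Definition resz (z : int) : 'I_n := Ordinal (absz_modz_ltn z).

Let n0 : n%:Z != 0. Proof. by rewrite eqz_nat -lt0n. Qed.

Lemma reszE z : (resz z)%:Z = (z %% n)%Z.
Proof. by rewrite /= gez0_abs ?modz_ge0. Qed.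

Lemma eq_resz z w : (resz z == resz w) = (z == w %[mod n])%Z.
Proof. by rewrite -val_eqE -eqz_nat !reszE. Qed.

Lemma dvdz_resz z : (n %| (resz z)%:Z - z)%Z.
Proof. by rewrite reszE {2}(divz_eq z n) opprD addrCA subrr addr0 rpredN dvdz_mull. Qed.

Lemma resz_eq (i : 'I_n) z : (n %| z - i%:Z)%Z -> resz z = i.
Proof.
rewrite -eqz_mod_dvd => /eqP zi; apply: val_inj => /=.
by rewrite zi modz_small // lez_nat ltz_nat ltn_ord.
Qed.

Definition resv (v : int * int) : 'I_n * 'I_n := (resz v.1, resz v.2).

Definition ivec (c : 'I_n * 'I_n) : int * int := ((c.1 : nat)%:Z, (c.2 : nat)%:Z).

Definition oppv (c : 'I_n * 'I_n) : 'I_n * 'I_n := resv (- (ivec c).1, - (ivec c).2).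

Lemma resvN v : resv (- v.1, - v.2) = oppv (resv v).
Proof.
rewrite /oppv /resv /=; congr pair; apply/eqP; rewrite eq_resz eqz_mod_dvd opprK addrC;
  exact: dvdz_resz.
Qed.

Lemma resz_nat (i : 'I_n) : resz i%:Z = i.
Proof. by apply: resz_eq; rewrite subrr dvdz0. Qed.

Lemma resv_ivec c : resv (ivec c) = c.
Proof. by case: c => a b; rewrite /resv /= !resz_nat. Qed.

Lemma oppvK : involutive oppv.
Proof. by move=> c; rewrite [oppv c]/oppv -resvN /= !opprK resv_ivec. Qed.

Lemma eqmod_pm_resv v w :
  eqmod_pm n v w <-> (resv v == resv w) || (resv v == oppv (resv w)).
Proof.
rewrite -resvN /resv !xpair_eqE !eq_resz !eqz_mod_dvd /= !opprK.
split=> [[e /sqr_int_eq1[]-> []] | /orP[/andP[d1 d2] | /andP[d1 d2]]].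
- by rewrite !mul1r => -> ->.
- by rewrite !mulN1r !opprK => -> ->; rewrite orbT.
- by exists 1; rewrite ?mulr1 ?mul1r.
- by exists (-1) => //; rewrite !mulN1r !opprK.
Qed.

Definition coprime_pairs : {set 'I_n * 'I_n} :=
  [set c : 'I_n * 'I_n | coprime (gcdn c.1 c.2) n].

Lemma resv_coprime_pairsE v : (resv v \in coprime_pairs) = coprimez (gcdz v.1 v.2) n.
Proof.
rewrite inE; have -> : coprime (gcdn (resv v).1 (resv v).2) n =
                       coprimez (gcdz (v.1 %% n)%Z (v.2 %% n)%Z) n by [].
by rewrite /coprimez -!gcdzA gcdz_modl gcdzCA gcdz_modl gcdzCA.
Qed.

Lemma oppv_coprime_pairs c : c \in coprime_pairs -> oppv c \in coprime_pairs.
Proof.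
rewrite /oppv resv_coprime_pairsE /= gcdNz gcdzN.
by rewrite -(resv_coprime_pairsE (ivec c)) resv_ivec.
Qed.

Lemma oppv_neq : (2 < n)%N -> forall c, c \in coprime_pairs -> oppv c != c.
Proof.
have dvdn_2 (i : 'I_n) : resz (- i%:Z) = i -> (n %| 2 * i)%N.
  move/eqP; rewrite -{2}(resz_nat i) eq_resz eqz_mod_dvd -opprD rpredN -PoszD.
  by rewrite mul2n -addnn.
move=> n_gt2 [a b]; rewrite inE /= => cop.
apply/eqP; rewrite /oppv /resv /= => -[/dvdn_2 n_2a /dvdn_2 n_2b].
have : (n %| gcdn (gcdn (2 * a) (2 * b)) (2 * n))%N.
  by rewrite !dvdn_gcd n_2a n_2b dvdn_mull.
by rewrite -!muln_gcdr (eqP cop) muln1 => /dvdn_leq; lia.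
Qed.

(* Shifting by n makes both entries positive; adding the \pi(a)'-part of b times n to a
   then removes every prime factor shared with b. *)
Definition lift_pair (c : 'I_n * 'I_n) : int * int :=
  let a := (c.1 + n)%N in let b := (c.2 + n)%N in
  ((a + b`_(\pi(a))^' * n)%N%:Z, b%:Z).

Lemma resv_lift_pair c : resv (lift_pair c) = c.
Proof.
case: c => a b; rewrite /lift_pair /resv /=; set k := partn _ _.
by congr pair; apply: resz_eq; rewrite !PoszD ?PoszM; apply/dvdzP;
  [exists (1 + k%:Z) | exists 1]; ring.
Qed.

Lemma coprimez_lift_pair c :
  c \in coprime_pairs -> coprimez (lift_pair c).1 (lift_pair c).2.
Proof.
have cE : resv ((c.1 + n)%N%:Z, (c.2 + n)%N%:Z) = c.
  by case: c => a b; congr pair; apply: resz_eq; rewrite /= PoszD addrAC subrr add0r.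
rewrite -{1}cE resv_coprime_pairsE /= => cop.
by rewrite coprimezE /=; apply: coprime_add_part; rewrite ?addn_gt0 ?n_gt0 ?orbT.
Qed.

End Residues.

(** * The number of residue pairs coprime to n *)

Section CoprimePairsMul.
Variables (m n : nat) (m_gt0 : (0 < m)%N) (n_gt0 : (0 < n)%N).
Hypothesis mn_cop : coprime m n.

Let mn_gt0 : (0 < m * n)%N. Proof. by rewrite muln_gt0 m_gt0. Qed.

Definition crt_split (c : 'I_(m * n) * 'I_(m * n)) :=
  (resv m_gt0 (ivec c), resv n_gt0 (ivec c)).

Lemma crt_split_inj : injective crt_split.
Proof.
move=> c c' /eqP; rewrite !xpair_eqE !eq_resz => /andP[/andP[e1 e2] /andP[e3 e4]].
rewrite -[c](resv_ivec mn_gt0) -[c'](resv_ivec mn_gt0); congr pair; apply/eqP;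
  by rewrite eq_resz PoszM zchinese_remainder ?e1 ?e2 ?e3 ?e4.
Qed.

Lemma card_coprime_pairsM :
  #|coprime_pairs (m * n)| = (#|coprime_pairs m| * #|coprime_pairs n|)%N.
Proof.
have crt_bij : bijective crt_split.
  by apply: inj_card_bij crt_split_inj _; rewrite !card_prod !card_ord mulnACA.
rewrite -cardsX -(on_card_preimset (onW_bij _ crt_bij)); apply: eq_card => c.
rewrite -[c in LHS](resv_ivec mn_gt0) resv_coprime_pairsE inE /= in_setX.
by rewrite !resv_coprime_pairsE PoszM coprimezMr.
Qed.

End CoprimePairsMul.

Section CoprimePairsPrimePower.
Variables (p e : nat) (p_pr : prime p).

Let p_gt0 : (0 < p)%N. Proof. exact: prime_gt0. Qed.

Lemma mulp_ltn (i : 'I_(p ^ e)) : (p * i < p ^ e.+1)%N.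
Proof. by rewrite expnS ltn_pmul2l. Qed.

Definition mulp (c : 'I_(p ^ e) * 'I_(p ^ e)) : 'I_(p ^ e.+1) * 'I_(p ^ e.+1) :=
  (Ordinal (mulp_ltn c.1), Ordinal (mulp_ltn c.2)).

Lemma mulp_inj : injective mulp.
Proof.
move=> [a b] [a' b'] [/eqP + /eqP]; rewrite !eqn_pmul2l //.
by move=> /eqP/val_inj-> /eqP/val_inj->.
Qed.

Lemma coprime_pairs_pfactorC : ~: coprime_pairs (p ^ e.+1) = mulp @: setT.
Proof.
apply/setP => -[a b]; rewrite !inE /= coprime_pexpr // coprime_sym prime_coprime //.
rewrite dvdn_gcd negbK.
apply/andP/imsetP => [[/dvdnP[i ai] /dvdnP[j bj]] | [[i j] _ [-> ->]]].
  have lt_i (k : nat) (x : 'I_(p ^ e.+1)) : x = k * p :> nat -> (k < p ^ e)%N.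
    by move=> xE; have := ltn_ord x; rewrite xE expnS mulnC ltn_pmul2r.
  exists (Ordinal (lt_i _ _ ai), Ordinal (lt_i _ _ bj)) => //.
  by congr pair; apply: val_inj; rewrite /= mulnC.
by rewrite /= !dvdn_mulr.
Qed.

Lemma card_coprime_pairs_pfactor :
  #|coprime_pairs (p ^ e.+1)|%:R = ((p ^ e.+1) ^ 2)%:R * (1 - ((p ^ 2)%:R)^-1) :> rat.
Proof.
have := cardsC (coprime_pairs (p ^ e.+1)).
rewrite coprime_pairs_pfactorC card_imset ?cardsT ?card_prod ?card_ord; last exact: mulp_inj.
move/(congr1 (fun k => k%:R : rat)); rewrite natrD => /(canRL (addrK _)) ->.
have p0 : (p%:R : rat) != 0 by rewrite pnatr_eq0 -lt0n.
by rewrite !natrM !natrX !exprS; field.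
Qed.

End CoprimePairsPrimePower.

Lemma card_coprime_pairs n : (0 < n)%N ->
  #|coprime_pairs n|%:R = (n ^ 2)%:R * \prod_(p <- primes n) (1 - ((p ^ 2)%:R)^-1) :> rat.
Proof.
elim/ltn_ind: n => n IH n_gt0; have [n_le1 | n_gt1] := leqP n 1.
  have -> : n = 1%N by lia.
  have -> : coprime_pairs 1 = setT by apply/setP => c; rewrite !inE coprimen1.
  by rewrite cardsT card_prod card_ord big_nil mulr1.
have p_pr := pdiv_prime n_gt1; set p := pdiv n in p_pr *.
have [m cop_pm nE] := pfactor_coprime p_pr n_gt0.
have [e eE] : exists e, logn p n = e.+1.
  by exists (logn p n).-1; rewrite prednK // lognE p_pr n_gt0 pdiv_dvd.
have m_gt0 : (0 < m)%N by move: n_gt0; rewrite nE muln_gt0 => /andP[].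
have m_lt_n : (m < n)%N.
  by rewrite [in X in (_ < X)%N]nE eE ltn_Pmulr // -[1%N](expn0 p) ltn_exp2l ?prime_gt1.
have cop : coprime m (p ^ e.+1) by rewrite coprime_sym coprime_pexpl.
have pe_gt0 : (0 < p ^ e.+1)%N by rewrite expn_gt0 prime_gt0.
rewrite nE eE (card_coprime_pairsM m_gt0 pe_gt0 cop) natrM IH // big_primesM //.
rewrite primesX // (primes_prime p_pr) big_seq1 card_coprime_pairs_pfactor //.
by rewrite !natrX natrM natrX; ring.
Qed.

(** * Cusps of Gamma_n *)

Section Cusps.
Variables (n : nat) (n_gt0 : (0 < n)%N).

Definition cusp_class (x : cuspQ) : 'I_n * 'I_n :=
  resv n_gt0 (vec_of_cusp (scale_cusp n x)).

Definition cusp_rep (c : 'I_n * 'I_n) : cuspQ :=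
  unscale_cusp n (cusp_of_vec (lift_pair c)).

Lemma cusp_class_coprime_pairs x : cusp_class x \in coprime_pairs n.
Proof. by rewrite resv_coprime_pairsE (eqP (coprimez_vec_of_cusp _)) /coprimez gcd1z. Qed.

Lemma Gamma_equiv_class x y :
  Gamma_equiv n x y <-> eq_mod_nu (oppv n_gt0) (cusp_class x) (cusp_class y).
Proof. exact: iff_trans (Gamma_equivP n_gt0 x y) (eqmod_pm_resv n_gt0 _ _). Qed.

Lemma cusp_class_rep c :
  c \in coprime_pairs n -> eq_mod_nu (oppv n_gt0) (cusp_class (cusp_rep c)) c.
Proof.
move=> cC; rewrite /cusp_class /cusp_rep unscale_cuspK //.
have [e /sqr_int_eq1[]-> ->] := vec_of_cusp_of_vec (coprimez_lift_pair n_gt0 cC).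
  by rewrite !mul1r -surjective_pairing resv_lift_pair /eq_mod_nu eqxx.
by rewrite !mulN1r resvN resv_lift_pair /eq_mod_nu eqxx orbT.
Qed.

End Cusps.

Theorem proposition7p4 (n : nat) : (3 <= n)%N ->
  exists s : seq cuspQ, cusp_transversal n s /\ (size s)%:R = cusp_formula n.
Proof.
move=> n_gt2; have n_gt0 : (0 < n)%N by lia.
have oppv_neq_n := oppv_neq n_gt0 n_gt2.
exists (half_set_reps (oppv n_gt0) (coprime_pairs n) (@cusp_rep n)); split.
  apply: (half_set_transversal (oppvK n_gt0) (oppv_coprime_pairs n_gt0) oppv_neq_n None
    (cusp_class_coprime_pairs n_gt0) (Gamma_equiv_class n_gt0) (cusp_class_rep n_gt0)).
rewrite size_map -cardE /cusp_formula mulrAC -card_coprime_pairs //.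
by rewrite (card_half_set (oppvK n_gt0) (oppv_coprime_pairs n_gt0) oppv_neq_n) natrM; field.
Qed.
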